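(* Let $X$ be a topological space and let $K_n\subseteq\mathbb R^X$ for $n\in\mathbb N$. Let $\Gamma=\bigcup_{n\in\mathbb N}K_n$ and suppose that for each $n\in\mathbb N$ the set $A_n$ of points $x\in X$ at which $K_n$ is equicontinuous is a residual subset of $X$. Then $X$ is conditionally $\sigma^*_{C(X_\Gamma)}$-$\alpha$-favorable. In particular, $X$ is conditionally $\sigma^*_\Gamma$-$\alpha$-favorable.
   Context: A family $K\subseteq\mathbb R^X$ is equicontinuous at $x\in X$ if for every $\varepsilon>0$ there is a neighborhood $U$ of $x$ such that $|g(y)-g(x)|<\varepsilon$ for all $y\in U$ and all $g\in K$. A set is residual if its complement is of first category. $X_\Gamma$ denotes the set $X$ equipped with the topology generated by the functions in $\Gamma$ (the weakest topology making each $g\in\Gamma$ continuous), and $C(X_\Gamma)$ is the set of real-valued continuous functions on $X_\Gamma$, viewed as a subset of $\mathbb R^X$. For $\Lambda\subseteq\mathbb R^X$, the game $\mathcal J^*_\Lambda$ on $X$: players $\beta$ and $\alpha$ alternately choose nonempty open subsets of $X$, $V_0\supseteq U_0\supseteq V_1\supseteq U_1\supseteq\cdots$, with $\beta$ choosing the $V_n$ (starting with $V_0$) and $\alpha$ the $U_n$. Player $\alpha$ wins the play $((V_n,U_n))_n$ iff for every sequence $(a_n)$ with $a_n\in U_n$ for all $n$ and every $g\in\Lambda$ there exists $t\in\bigcap_n U_n$ with $g(t)\in\overline{\{g(a_n):n\in\mathbb N\}}$. $X$ is conditionally $\sigma^*_\Lambda$-$\alpha$-favorable if $\alpha$ has a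 strategy $\tau$ such that every play compatible with $\tau$ satisfying $\bigcap_n U_n\neq\emptyset$ is won by $\alpha$. *)

From HB Require Import structures.
From mathcomp Require Import all_boot all_order all_algebra.
From mathcomp Require Import all_classical all_reals topology normedtype.
Set Implicit Arguments. Unset Strict Implicit. Unset Printing Implicit Defensive.
Import Order.TTheory GRing.Theory Num.Theory.
Import numFieldNormedType.Exports.
Local Open Scope classical_set_scope.
Local Open Scope ring_scope.

Section Defs.
Context {X : topologicalType} {R : realType}.

Definition equicontinuous_at (K : set (X -> R)) (x : X) : Prop :=
  forall eps : R, 0 < eps -> exists U : set X, nbhs x U /\
    forall y g, U y -> K g -> `|g y - g x| < eps.

Definition nowhere_dense (A : set X) : Prop := (closure A)^° = set0.

Definition first_category (A : set X) : Prop :=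
  exists F : nat -> set X, (forall n, nowhere_dense (F n)) /\
    A `<=` \bigcup_n F n.

Definition residual (A : set X) : Prop := first_category (~` A).

Definition is_topology (O : set (set X)) : Prop :=
  O setT /\ (forall A B, O A -> O B -> O (A `&` B)) /\
  (forall F : set (set X), F `<=` O -> O (\bigcup_(A in F) A)).

(** open sets of X_Gamma: the weakest topology making every g in Gamma continuous *)
Definition weak_open (Gamma : set (X -> R)) (W : set X) : Prop :=
  forall O : set (set X), is_topology O ->
    (forall g (U : set R), Gamma g -> open U -> O (g @^-1` U)) -> O W.

Definition C_weak (Gamma : set (X -> R)) : set (X -> R) :=
  [set f | forall U : set R, open U -> weak_open Gamma (f @^-1` U)].

(** The game J*_Lambda.  A strategy for alpha maps the history
    [:: V_0; U_0; ...; U_(n-1); V_n] to alpha's answer U_n. *)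
Definition strategy := seq (set X) -> set X.

Definition history (V U : nat -> set X) (n : nat) : seq (set X) :=
  flatten [seq [:: V i; U i] | i <- iota 0 n] ++ [:: V n].

Definition legal_strategy (tau : strategy) : Prop :=
  forall (h : seq (set X)) (V : set X), open V -> V !=set0 ->
    [/\ open (tau (rcons h V)), tau (rcons h V) !=set0 & tau (rcons h V) `<=` V].

Definition compatible_play (tau : strategy) (V U : nat -> set X) : Prop :=
  [/\ forall n, open (V n) /\ V n !=set0,
      forall n, V n.+1 `<=` U n &
      forall n, U n = tau (history V U n)].

Definition alpha_wins (Lambda : set (X -> R)) (U : nat -> set X) : Prop :=
  forall a : nat -> X, (forall n, U n (a n)) ->
  forall g, Lambda g ->
    exists t, (\bigcap_n U n) t /\ closure (range (g \o a)) (g t).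

Definition cond_sigma_star_alpha_favorable (Lambda : set (X -> R)) : Prop :=
  exists tau : strategy, legal_strategy tau /\
    forall V U, compatible_play tau V U -> \bigcap_n U n !=set0 ->
      alpha_wins Lambda U.

End Defs.

From mathcomp Require Import all_boot all_order all_algebra.
From mathcomp Require Import all_classical all_reals topology normedtype.
Import Order.TTheory GRing.Theory Num.Theory.
Import numFieldNormedType.Exports.
Set Implicit Arguments. Unset Strict Implicit. Unset Printing Implicit Defensive.
Local Open Scope classical_set_scope.
Local Open Scope ring_scope.

(* Write the complement of each A_n as a countable union of nowhere dense
   sets F n k.  Enumerating all triples (n, k, j), alpha answers at stage
   (n, k, j) with an open set that misses the closure of F n k and, whenever
   possible, on which K_n oscillates by at most 1/(j+1).  A point t in the
   intersection of alpha's moves lies outside every F n k, so every K_n is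
   equicontinuous at t; hence "whenever possible" was always possible, and
   g(a_m) --> g(t) for every g in Gamma and every sequence (a_m) chosen in
   alpha's moves.  The sets W with "W t implies eventually a_m in W" form a
   topology making Gamma continuous, so they contain every open set of
   X_Gamma; thus f(a_m) --> f(t) for every f in C(X_Gamma), and f(t) lies in
   the closure of {f(a_m)}. *)

Section General.
Variables (X : topologicalType) (R : realType).

Lemma nowhere_dense_open_setIC_neq0 (A V : set X) :
  nowhere_dense A -> open V -> V !=set0 -> V `&` ~` closure A !=set0.
Proof.
move=> ndA oV [x Vx]; apply/set0P/eqP => /subsets_disjoint VA.
have : (closure A)° x by apply: filterS VA _; exact: open_nbhs_nbhs.
by rewrite ndA.
Qed.

Definition osc_le (K : set (X -> R)) (e : R) (W : set X) : Prop :=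
  forall g y z, K g -> W y -> W z -> `|g y - g z| <= e.

Lemma equicontinuous_at_osc_le (K : set (X -> R)) (t : X) (e : R) :
  equicontinuous_at K t -> 0 < e -> exists2 W, open_nbhs t W & osc_le K e W.
Proof.
move=> Kt e0; have [U [Ut Ue]] := Kt (e / 2) (divr_gt0 e0 (ltr0Sn _ 1)).
exists U°; first by split; [exact: open_interior | exact: Ut].
move=> g y z Kg /interior_subset Uy /interior_subset Uz.
rewrite (splitr e); apply: le_trans (ler_distD (g t) _ _) _.
by rewrite (distrC (g t)) lerD // ltW // Ue.
Qed.

Lemma weak_open_eventually (Gamma : set (X -> R)) (a : nat -> X) (t : X)
    (W : set X) :
  (forall g, Gamma g -> g \o a @ \oo --> g t) ->
  weak_open Gamma W -> W t -> \forall m \near \oo, W (a m).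
Proof.
move=> Gcvg oW.
apply: (oW [set W | W t -> \forall m \near \oo, W (a m)]) => [|g U Gg oU Ut].
  split; [by move=> _; exact: filterT | split].
    by move=> A B Aev Bev [At Bt]; exact: filterI (Aev At) (Bev Bt).
  move=> G GO [A GA At]; apply: filterS (GO A GA At) => m Aam.
  by exists A.
exact: Gcvg g Gg U (open_nbhs_nbhs (conj oU Ut)).
Qed.

Lemma C_weak_cvg (Gamma : set (X -> R)) (a : nat -> X) (t : X) (f : X -> R) :
  (forall g, Gamma g -> g \o a @ \oo --> g t) ->
  C_weak Gamma f -> f \o a @ \oo --> f t.
Proof.
move=> Gcvg Cf B /nbhs_interior Bo.
have := weak_open_eventually Gcvg (Cf _ (@open_interior _ B)) (nbhs_singleton Bo).
by apply: filterS => m /interior_subset.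
Qed.

Lemma subset_C_weak (Gamma : set (X -> R)) : Gamma `<=` C_weak Gamma.
Proof. by move=> g Gg U oU O _; apply. Qed.

Lemma cond_sigma_star_alpha_favorableS (Lambda Lambda' : set (X -> R)) :
  Lambda' `<=` Lambda -> cond_sigma_star_alpha_favorable Lambda ->
  cond_sigma_star_alpha_favorable Lambda'.
Proof.
move=> sub [tau [legal win]]; exists tau; split => // V U play ne a aU g Lg.
exact: win play ne a aU g (sub g Lg).
Qed.

End General.

Lemma cvg_closure_range (T : topologicalType) (u : nat -> T) (l : T) :
  u @ \oo --> l -> closure (range u) l.
Proof.
move=> ul B /ul Bu; have [m Bum] := @filter_ex _ \oo _ (u @^-1` B) Bu.
by exists (u m); split => //; exists m.
Qed.

Section Strategy.
Variables (X : topologicalType) (R : realType).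
Variables (K : nat -> set (X -> R)) (F : nat -> nat -> set X).

(* Stage m of the game handles the triple (n, k, j) = decode m. *)
Definition decode (m : nat) : nat * nat * nat :=
  odflt (0, 0, 0)%N (unpickle m).

Lemma decode_pickle (p : nat * nat * nat) : decode (pickle p) = p.
Proof. by rewrite /decode pickleK. Qed.

Definition avoid (m : nat) (V : set X) : set X :=
  V `&` ~` closure (F (decode m).1.1 (decode m).1.2).

Definition refinement (m : nat) (V U : set X) : Prop :=
  [/\ open U, U !=set0, U `<=` avoid m V &
      osc_le (K (decode m).1.1) (decode m).2.+1%:R^-1 U].

Definition answer (m : nat) (V : set X) : set X :=
  if pselect (exists U, refinement m V U) is left H then projT1 (cid H)
  else avoid m V.

(* A history ending with beta's n-th move has length 2n+1. *)
Definition alpha_strategy : strategy :=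
  fun h => answer (size h)./2 (last set0 h).

Lemma avoid_open m V : open V -> open (avoid m V).
Proof. by move=> oV; apply: openI => //; rewrite openC; exact: closed_closure. Qed.

Lemma answer_refinement m V :
  (exists U, refinement m V U) -> refinement m V (answer m V).
Proof. by move=> ex; rewrite /answer; case: pselect => // H; case: (cid H). Qed.

Lemma answer_sub_avoid m V : answer m V `<=` avoid m V.
Proof. by rewrite /answer; case: pselect => [H|_] //; case: (projT2 (cid H)). Qed.

Lemma answer_open_neq0 m V : (forall n k, nowhere_dense (F n k)) ->
  open V -> V !=set0 -> open (answer m V) /\ answer m V !=set0.
Proof.
move=> ndF oV nV; rewrite /answer; case: pselect => [H|_].
  by case: (projT2 (cid H)).
by split; [exact: avoid_open | exact: nowhere_dense_open_setIC_neq0].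
Qed.

Lemma alpha_strategy_legal :
  (forall n k, nowhere_dense (F n k)) -> legal_strategy alpha_strategy.
Proof.
move=> ndF h V oV nV; rewrite /alpha_strategy last_rcons.
have [oA nA] := answer_open_neq0 (size (rcons h V))./2 ndF oV nV.
by split => // x /answer_sub_avoid [].
Qed.

Lemma size_history (V U : nat -> set X) n : size (history V U n) = n.*2.+1.
Proof.
rewrite size_cat addn1; congr _.+1.
by elim: n 0%N => [|n IH] m //=; rewrite IH.
Qed.

Lemma alpha_strategy_history V U n :
  alpha_strategy (history V U n) = answer n (V n).
Proof.
rewrite /alpha_strategy size_history /= uphalf_double.
by rewrite /history cats1 last_rcons.
Qed.

Section Play.
Variables (V U : nat -> set X).
Hypothesis play : compatible_play alpha_strategy V U.

Lemma play_answer n : U n = answer n (V n).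
Proof. by case: play => _ _ ->; rewrite alpha_strategy_history. Qed.

Lemma play_avoid n : U n `<=` avoid n (V n).
Proof. by rewrite play_answer; exact: answer_sub_avoid. Qed.

Lemma play_decreasing m m' : (m <= m')%N -> U m' `<=` U m.
Proof.
move=> /subnK <-; elim: (m' - m)%N => [|d IH] //; rewrite addSn.
apply: subset_trans IH; case: play => _ VU _.
by apply: subset_trans (VU _) => x /play_avoid [].
Qed.

Hypothesis cover :
  forall n, ~` [set x | equicontinuous_at (K n) x] `<=` \bigcup_k F n k.
Variable t : X.
Hypothesis Ut : forall n, U n t.

Lemma play_equicontinuous n : equicontinuous_at (K n) t.
Proof.
apply: contrapT => /cover [k _ Fkt].
have [_] := play_avoid (Ut (pickle (n, k, 0%N))).
by rewrite /avoid decode_pickle; apply; exact: subset_closure.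
Qed.

Lemma play_osc_le n j : osc_le (K n) j.+1%:R^-1 (U (pickle (n, 0%N, j))).
Proof.
set m := pickle _; rewrite play_answer.
suff /answer_refinement[] : exists W, refinement m (V m) W.
  by rewrite /m decode_pickle.
have j0 : 0 < j.+1%:R^-1 :> R by rewrite invr_gt0.
have [W [oW Wt] oscW] := equicontinuous_at_osc_le (play_equicontinuous n) j0.
have Vm : open (V m) by case: play => /(_ m)[].
exists (W `&` avoid m (V m)); split.
- exact: openI oW (avoid_open m Vm).
- by exists t; split => //; exact: play_avoid (Ut m).
- by move=> x [].
- by rewrite /m decode_pickle => g y z Kg [Wy _] [Wz _]; exact: oscW.
Qed.

Lemma play_cvg n g (a : nat -> X) :
  (forall m, U m (a m)) -> K n g -> g \o a @ \oo --> g t.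
Proof.
move=> aU Kg; apply/cvgrPdist_le => e e0.
have [j je] := ltr_add_invr e0; rewrite add0r in je.
exists (pickle (n, 0%N, j)) => // m /= le.
apply: le_trans (ltW je).
apply: (play_osc_le Kg (Ut _)).
exact: play_decreasing le _ (aU m).
Qed.

End Play.
End Strategy.

Theorem proposition2p2 (X : topologicalType) (R : realType)
    (K : nat -> set (X -> R)) :
  let Gamma := \bigcup_n K n in
  (forall n, residual [set x : X | equicontinuous_at (K n) x]) ->
  cond_sigma_star_alpha_favorable (C_weak Gamma) /\
  cond_sigma_star_alpha_favorable Gamma.
Proof.
move=> Gamma res.
have [F /all_and2 [ndF cover]] := choice res.
have fav : cond_sigma_star_alpha_favorable (C_weak Gamma).
  exists (alpha_strategy K F); split; first exact: alpha_strategy_legal.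
  move=> V U play [t Ut] a aU f Cf; exists t; split => //.
  apply: cvg_closure_range; apply: C_weak_cvg Cf => g [n _].
  exact: (play_cvg play cover (fun m => Ut m I) aU).
split => //; exact: cond_sigma_star_alpha_favorableS (@subset_C_weak _ _ _) fav.
Qed.
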